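(* For all $1\le a\le n$, $S_a\cdot L(u)=0$, i.e. every coefficient of the formal power series $L(u)$ in $D$ is annihilated by $S_a$.
   Context: Fix $n\ge4$. Let $Q_a(u)$ ($1\le a\le n$, $u\in\mathbb C$) be algebraically independent commuting indeterminates, $\mathcal Q=\mathbb Z[Q_a(u)^{\pm1}]$. Bilinear form of type $D_n$: $(\alpha_a|\alpha_a)=2$, $(\alpha_a|\alpha_{a+1})=(\alpha_{a+1}|\alpha_a)=-1$ for $1\le a\le n-2$, $(\alpha_{n-2}|\alpha_n)=(\alpha_n|\alpha_{n-2})=-1$, all other $(\alpha_a|\alpha_b)=0$ ($a\ne b$). Put $Y_a(u)=Q_a(u-1)/Q_a(u+1)$, $Y_0(u)=1$, $\mathcal Y=\mathbb Z[Y_a(u)^{\pm1}]$. Define $z_a(u)=\frac{Y_a(u+a)}{Y_{a-1}(u+a+1)}$, $z_{\bar a}(u)=\frac{Y_{a-1}(u+2n-a-1)}{Y_a(u+2n-a)}$ for $1\le a\le n-2$; $z_{n-1}(u)=\frac{Y_n(u+n-1)Y_{n-1}(u+n-1)}{Y_{n-2}(u+n)}$, $z_{\overline{n-1}}(u)=\frac{Y_{n-2}(u+n)}{Y_n(u+n+1)Y_{n-1}(u+n+1)}$, $z_n(u)=\frac{Y_n(u+n-1)}{Y_{n-1}(u+n+1)}$, $z_{\bar n}(u)=\frac{Y_{n-1}(u+n-1)}{Y_n(u+n+1)}$. In the ring of formal power series $\sum_{j\ge0}c_j(u)D^j$ ($c_j(u)\in\mathcal Y$, $D\,c(u)=c(u+1)D$)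 define \[ L(u)=(1-z_{\bar1}(u)D^2)\cdots(1-z_{\bar n}(u)D^2)\,(1-z_n(u)z_{\bar n}(u+2)D^4)^{-1}\,(1-z_n(u)D^2)\cdots(1-z_1(u)D^2), \] with $(1-cD^4)^{-1}=\sum_{k\ge0}(cD^4)^k$. Screening: let $A_a(u)=\prod_{b=1}^n\frac{Q_b(u-(\alpha_a|\alpha_b))}{Q_b(u+(\alpha_a|\alpha_b))}$; let $\mathcal S$ be the commutative ring generated over $\mathcal Q$ by symbols $S_a(u)$ subject to $S_a(u+2)=A_a(u+1)S_a(u)$. $S_a:\mathcal Y\to\mathcal S$ is the additive map obeying the Leibniz rule with $S_a\cdot Y_b(u)=\delta_{ab}Y_b(u)S_b(u)$; it acts on power series in $D$ coefficientwise. *)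

From HB Require Import structures.
From mathcomp Require Import all_boot all_order all_algebra.
From mathcomp Require Import complex.
From mathcomp Require Import Rstruct.
From Stdlib Require Rdefinitions.

Set Implicit Arguments.
Unset Strict Implicit.
Unset Printing Implicit Defensive.

Import Order.TTheory GRing.Theory Num.Theory.
Local Open Scope ring_scope.

Notation CC := (Rdefinitions.R)[i].

Definition shn (u : CC) (k : nat) : CC := u + k%:R.

Definition Dn_edge (n a b : nat) : bool :=
  ((a.+1 == b) && (b <= n.-1)%N) || ((a == (n - 2)%N) && (b == n)).

Definition Dn_form (n a b : nat) : int :=
  if a == b then (2 : int)
  else if Dn_edge n a b || Dn_edge n b a then (-1 : int) else (0 : int).

(* Formal power series  sum_j c_j(u) D^j  with D c(u) = c(u+1) D.
   A series is given by its coefficient family  j |-> (u |-> c_j(u)). *)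
Section Series.
Variable K : comNzRingType.

Definition series := nat -> CC -> K.

Definition sone : series := fun j _ => (j == 0%N)%:R.

Definition smul (f g : series) : series :=
  fun j u => \sum_(i < j.+1) f i u * g (j - i)%N (shn u i).

Definition sfac2 (c : CC -> K) : series :=
  fun j u => if j == 0%N then 1 else if j == 2%N then - c u else 0.

(* (1 - c(u) D^4)^{-1} = sum_k (c(u) D^4)^k,
   (c(u) D^4)^k = c(u) c(u+4) ... c(u+4(k-1)) D^{4k}. *)
Definition sgeom4 (c : CC -> K) : series :=
  fun j u => if (4 %| j)%N then \prod_(k < j %/ 4) c (shn u (4 * k)) else 0.
End Series.

(* Y-variables: y b v stands for Y_b(v), yi b v for its inverse
   (meaningful for 1 <= b <= n); Y_0 = 1. *)
Section ZFunctions.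
Variable K : comNzRingType.
Variable n : nat.
Variables y yi : nat -> CC -> K.

Definition Yv (b : nat) (v : CC) : K := if b == 0%N then 1 else y b v.
Definition Yiv (b : nat) (v : CC) : K := if b == 0%N then 1 else yi b v.

Definition zD (a : nat) (u : CC) : K :=
  if (a <= n - 2)%N then Yv a (shn u a) * Yiv a.-1 (shn u a.+1)
  else if a == n.-1 then
    Yv n (shn u n.-1) * Yv n.-1 (shn u n.-1) * Yiv (n - 2) (shn u n)
  else Yv n (shn u n.-1) * Yiv n.-1 (shn u n.+1).

Definition zbD (a : nat) (u : CC) : K :=
  if (a <= n - 2)%N then Yv a.-1 (shn u (2 * n - a - 1)) * Yiv a (shn u (2 * n - a))
  else if a == n.-1 then
    Yv (n - 2) (shn u n) * Yiv n (shn u n.+1) * Yiv n.-1 (shn u n.+1)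
  else Yv n.-1 (shn u n.-1) * Yiv n (shn u n.+1).

(* L(u) = (1 - z_{bar 1} D^2) ... (1 - z_{bar n} D^2)
          (1 - z_n(u) z_{bar n}(u+2) D^4)^{-1}
          (1 - z_n D^2) ... (1 - z_1 D^2) *)
Definition Lright : series K :=
  foldr (fun a acc => smul (sfac2 (zD a)) acc) (@sone K) (rev (iota 1 n)).

Definition Lmid : series K := sgeom4 (fun u => zD n u * zbD n (shn u 2)).

Definition Lseries : series K :=
  foldr (fun a acc => smul (sfac2 (zbD a)) acc) (smul Lmid Lright) (iota 1 n).
End ZFunctions.

(* A_a(v) = prod_b Q_b(v - (a_a|a_b)) / Q_b(v + (a_a|a_b)), evaluated in a
   ring T where Q_b(v) |-> q b v with inverse qi b v. *)
Definition Aroot (T : comNzRingType) (n : nat) (q qi : nat -> CC -> T)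
  (a : nat) (v : CC) : T :=
  \prod_(1 <= b < n.+1)
     (q b (v - (Dn_form n a b)%:~R) * qi b (v + (Dn_form n a b)%:~R)).

From HB Require Import structures.
From mathcomp Require Import all_boot all_order all_algebra.
From mathcomp Require Import complex Rstruct.
From mathcomp Require Import zify ring.
From Stdlib Require Import FunctionalExtensionality.

(* [S_a] is a derivation along the inclusion [Y -> S], so it kills every
   coefficient of a product of series whose coefficients it kills.  Every factor
   [1 - z D^2] of [L(u)] with [z] free of the [Y_a] is killed.  The remaining
   factors come in adjacent pairs [(1 - z D^2)(1 - z' D^2)] whose nontrivial
   coefficients are [z(u) + z'(u)] and [z(u) z'(u+2)]: in the product the
   logarithmic derivatives cancel, and in the sum [z'(u) / z(u)] is a monomial
   mapped to [A_a(W+1)], which is exactly the ratio [S_a(W+2) / S_a(W)].  The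
   coefficients of the middle factor have zero logarithmic derivative, except
   for [a = n]: there [1 - z_n D^2] and [1 - z_{bar n} D^2] are first exchanged
   across it, which pairs them with [1 - z_{bar (n-1)} D^2] and [1 - z_{n-1} D^2]. *)

Set Implicit Arguments.
Unset Strict Implicit.
Unset Printing Implicit Defensive.

Import GRing.Theory.
Local Open Scope ring_scope.

Lemma shnA (u : CC) k l : shn (shn u k) l = shn u (k + l)%N.
Proof. by rewrite /shn natrD addrA. Qed.

Lemma shn0 (u : CC) : shn u 0 = u.
Proof. by rewrite /shn addr0. Qed.

Lemma shnS (u : CC) k : shn u k + 1 = shn u k.+1.
Proof. by rewrite /shn -addrA -(natrD _ k 1) addn1. Qed.

Lemma shnSS (u : CC) k : shn u k + 2 = shn u k.+2.
Proof. by rewrite /shn -addrA -(natrD _ k 2) addn2. Qed.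

Lemma shnSB1 (u : CC) k : shn u k.+1 - 1 = shn u k.
Proof. by rewrite -shnS addrK. Qed.

Section SeriesAlgebra.
Variable K : comNzRingType.
Implicit Types (f g h : series K) (c w x : CC -> K).

Lemma sum_triangle_exchange (G : nat -> nat -> K) N :
  \sum_(0 <= i < N) \sum_(0 <= k < i.+1) G k i =
  \sum_(0 <= k < N) \sum_(0 <= m < N - k) G k (k + m)%N.
Proof.
elim: N => [|N IH]; first by rewrite !big_geq.
rewrite big_nat_recr //= IH [in RHS]big_nat_recr //= subSnn big_nat1 /= addn0.
have -> : \sum_(0 <= k < N) \sum_(0 <= m < N.+1 - k) G k (k + m)%N =
          \sum_(0 <= k < N) (\sum_(0 <= m < N - k) G k (k + m)%N + G k N).
  apply: eq_big_nat => k /andP[_ Hk].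
  by rewrite subSn ?(ltnW Hk) // big_nat_recr //= subnKC // ltnW.
by rewrite big_split /= big_nat_recr //= addrA.
Qed.

Lemma smulA f g h : smul (smul f g) h = smul f (smul g h).
Proof.
apply: functional_extensionality => j; apply: functional_extensionality => u.
rewrite /smul.
pose G k i := f k u * g (i - k)%N (shn u k) * h (j - i)%N (shn u i).
transitivity (\sum_(0 <= i < j.+1) \sum_(0 <= k < i.+1) G k i).
  rewrite big_mkord; apply: eq_bigr => i _; rewrite big_mkord mulr_suml.
  exact: eq_bigr.
rewrite sum_triangle_exchange big_mkord; apply: eq_bigr => k _.
rewrite subSn; last by rewrite -ltnS.
rewrite big_mkord mulr_sumr; apply: eq_bigr => m _.
by rewrite /G mulrA shnA addKn subnDA.
Qed.

Lemma smul_sfac2l c f j u :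
  smul (sfac2 c) f j u =
  f j u - (if (2 <= j)%N then c u * f (j - 2)%N (shn u 2) else 0).
Proof.
rewrite /smul /sfac2; case: j => [|[|j]].
- by rewrite big_ord_recl big_ord0 /= mul1r shn0 subr0 addr0.
- by rewrite !big_ord_recl big_ord0 /= mul1r mul0r shn0 subr0 !addr0.
rewrite !big_ord_recl /= mul1r mul0r shn0 add0r addrA big1 ?addr0 ?mulNr //.
by move=> i _ /=; rewrite mul0r.
Qed.

Lemma smul_sfac2r c f j u :
  smul f (sfac2 c) j u =
  f j u - (if (2 <= j)%N then f (j - 2)%N u * c (shn u (j - 2)) else 0).
Proof.
rewrite /smul /sfac2; case: j => [|[|j]].
- by rewrite big_ord_recl big_ord0 /= mulr1 subr0 addr0.
- by rewrite !big_ord_recr big_ord0 /= mulr0 mulr1 subr0 !add0r.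
rewrite !big_ord_recr /= subnn.
have -> : (j.+2 - j.+1 = 1)%N by lia.
have -> : (j.+2 - j = 2)%N by lia.
have -> : (j.+2 - 2 = j)%N by lia.
rewrite /= mulr0 addr0 mulr1 mulrN big1 ?add0r; first by rewrite addrC.
move=> i _ /=; have Hi := ltn_ord i.
rewrite ifF; last by apply/negbTE; lia.
by rewrite ifF ?mulr0 //; apply/negbTE; lia.
Qed.

Definition alt_prod w x (k : nat) (u : CC) : K :=
  \prod_(i < k) (w (shn u (4 * i)%N) * x (shn (shn u (4 * i)%N) 2)).

Lemma alt_prod_shift w x k u :
  alt_prod w x k u * w (shn u (4 * k)%N) = w u * alt_prod x w k (shn u 2).
Proof.
elim: k => [|k IH]; first by rewrite /alt_prod !big_ord0 mul1r mulr1 shn0.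
rewrite /alt_prod !big_ord_recr /= -/(alt_prod w x k u) -/(alt_prod x w k (shn u 2)).
rewrite !mulrA IH -!mulrA !shnA.
congr (_ * (_ * (x (shn u _) * w (shn u _)))); lia.
Qed.

Lemma alt_prodS w x k u :
  alt_prod w x k.+1 u = w u * (alt_prod x w k (shn u 2) * x (shn (shn u 2) (4 * k)%N)).
Proof.
rewrite /alt_prod big_ord_recr /= -/(alt_prod w x k u) -/(alt_prod x w k (shn u 2)).
by rewrite mulrA alt_prod_shift -mulrA !shnA addnC.
Qed.

Lemma sgeom4_mul4 c k u : sgeom4 c (4 * k)%N u = \prod_(i < k) c (shn u (4 * i)%N).
Proof. by rewrite /sgeom4 dvdn_mulr // mulKn. Qed.

Lemma sgeom4_mul4D c k r u : (0 < r < 4)%N -> sgeom4 c (4 * k + r)%N u = 0.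
Proof.
move=> /andP[r_gt0 r_lt4]; rewrite /sgeom4 dvdn_addr ?dvdn_mulr //.
by case: r r_gt0 r_lt4 => [|[|[|[|r]]]].
Qed.

Lemma nat_mod4_cases j : exists k,
  [\/ j = 4 * k, j = 4 * k + 1, j = 4 * k + 2 | j = 4 * k + 3]%N.
Proof.
have := divn_eq j 4; have := ltn_mod j 4.
move: (j %/ 4)%N (j %% 4)%N => k r r_lt4 ->; exists k; rewrite mulnC.
case: r r_lt4 => [|[|[|[|r]]]] // _; first by apply: Or41; rewrite addn0.
- exact: Or42.
- exact: Or43.
- exact: Or44.
Qed.

Section GeomFactor.
Variables w x : CC -> K.
Let G := smul (sgeom4 (fun v => w v * x (shn v 2))) (sfac2 w).

Lemma geom_fac2_mul4 k u : G (4 * k)%N u = alt_prod w x k u.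
Proof.
rewrite /G smul_sfac2r sgeom4_mul4; case: k => [|k] /=; first by rewrite subr0.
have -> : (4 * k.+1 - 2 = 4 * k + 2)%N by lia.
by rewrite sgeom4_mul4D // mul0r if_same subr0.
Qed.

Lemma geom_fac2_mul4D2 k u : G (4 * k + 2)%N u = - (alt_prod w x k u * w (shn u (4 * k)%N)).
Proof.
rewrite /G smul_sfac2r sgeom4_mul4D // ifT; last by lia.
by rewrite addnK sgeom4_mul4 add0r.
Qed.

Lemma geom_fac2_odd k r u : (r == 1)%N || (r == 3)%N -> G (4 * k + r)%N u = 0.
Proof.
move=> Hr; rewrite /G smul_sfac2r sgeom4_mul4D; last by case/orP: Hr => /eqP ->.
case/orP: Hr => /eqP ->.
  case: k => [|k]; first by rewrite subr0.
  have -> : (4 * k.+1 + 1 - 2 = 4 * k + 3)%N by lia.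
  by rewrite /= sgeom4_mul4D // mul0r if_same subr0.
have -> : (4 * k + 3 - 2 = 4 * k + 1)%N by lia.
by rewrite /= sgeom4_mul4D // mul0r if_same subr0.
Qed.

End GeomFactor.

Lemma sfac2_sgeom4_swap w x :
  smul (sfac2 x) (smul (sgeom4 (fun v => w v * x (shn v 2))) (sfac2 w)) =
  smul (sfac2 w) (smul (sgeom4 (fun v => x v * w (shn v 2))) (sfac2 x)).
Proof.
apply: functional_extensionality => j; apply: functional_extensionality => u.
rewrite !smul_sfac2l; have [k [->|->|->|->]] := nat_mod4_cases j.
- case: k => [|k]; first by rewrite !geom_fac2_mul4 /alt_prod !big_ord0.
  have -> : (2 <= 4 * k.+1)%N by lia.
  have -> : (4 * k.+1 - 2 = 4 * k + 2)%N by lia.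
  rewrite !geom_fac2_mul4 !geom_fac2_mul4D2 !mulrN !opprK.
  by rewrite (alt_prodS w x k u) (alt_prodS x w k u) addrC.
- case: k => [|k]; first by rewrite !geom_fac2_odd.
  have -> : (2 <= 4 * k.+1 + 1)%N by lia.
  have -> : (4 * k.+1 + 1 - 2 = 4 * k + 3)%N by lia.
  by rewrite !geom_fac2_odd // !mulr0.
- have -> : (2 <= 4 * k + 2)%N by lia.
  by rewrite addnK !geom_fac2_mul4 !geom_fac2_mul4D2 !alt_prod_shift addrC.
- have -> : (2 <= 4 * k + 3)%N by lia.
  have -> : (4 * k + 3 - 2 = 4 * k + 1)%N by lia.
  by rewrite !geom_fac2_odd // !mulr0.
Qed.

End SeriesAlgebra.

Section Screening.
Variables (R T : comNzRingType) (phi : {rmorphism R -> T}) (Sa : R -> T).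
Hypothesis Sa_add : forall x x', Sa (x + x') = Sa x + Sa x'.
Hypothesis Sa_mul : forall x x', Sa (x * x') = phi x * Sa x' + phi x' * Sa x.

Lemma Sa0 : Sa 0 = 0.
Proof. by apply: (addrI (Sa 0)); rewrite -Sa_add !addr0. Qed.

Lemma Sa1 : Sa 1 = 0.
Proof.
have := Sa_mul 1 1; rewrite mulr1 rmorph1 !mul1r => Sa11.
by apply: (addrI (Sa 1)); rewrite addr0 -Sa11.
Qed.

Lemma SaN x : Sa (- x) = - Sa x.
Proof. by apply: (addrI (Sa x)); rewrite -Sa_add !subrr Sa0. Qed.

Lemma Sa_sum I r (P : pred I) (F : I -> R) :
  Sa (\sum_(i <- r | P i) F i) = \sum_(i <- r | P i) Sa (F i).
Proof. exact: (big_morph Sa Sa_add Sa0). Qed.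

Lemma Sa_prod0 I r (P : pred I) (F : I -> R) :
  (forall i, P i -> Sa (F i) = 0) -> Sa (\prod_(i <- r | P i) F i) = 0.
Proof.
move=> SaF; apply: (big_rec (fun x => Sa x = 0)); first exact: Sa1.
by move=> i x Pi Sax; rewrite Sa_mul Sax SaF ?mulr0 ?addr0.
Qed.

Definition annihilated (f : series R) := forall j u, Sa (f j u) = 0.

Lemma annihilated_sone : annihilated (@sone R).
Proof. by move=> j u; rewrite /sone; case: (j == 0%N); rewrite ?Sa1 ?Sa0. Qed.

Lemma annihilated_smul f g :
  annihilated f -> annihilated g -> annihilated (smul f g).
Proof.
move=> Sf Sg j u; rewrite /smul Sa_sum big1 // => i _.
by rewrite Sa_mul Sf Sg !mulr0 addr0.
Qed.

Lemma annihilated_smul3 f g h :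
  annihilated (smul f g) -> annihilated h -> annihilated (smul f (smul g h)).
Proof. by rewrite -smulA; apply: annihilated_smul. Qed.

Lemma annihilated_sfac2 c : (forall u, Sa (c u) = 0) -> annihilated (sfac2 c).
Proof.
move=> Sc j u; rewrite /sfac2; case: (j == 0%N); first exact: Sa1.
by case: (j == 2%N); rewrite ?SaN ?Sc ?oppr0 ?Sa0.
Qed.

Lemma annihilated_sgeom4 c : (forall u, Sa (c u) = 0) -> annihilated (sgeom4 c).
Proof.
move=> Sc j u; rewrite /sgeom4; case: (4 %| j)%N; last exact: Sa0.
exact: Sa_prod0.
Qed.

Lemma annihilated_foldr_sfac2 (c : nat -> CC -> R) f bs :
  (forall b, b \in bs -> forall u, Sa (c b u) = 0) -> annihilated f ->
  annihilated (foldr (fun b acc => smul (sfac2 (c b)) acc) f bs).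
Proof.
elim: bs => [|b bs IH] Sc Sf //=; apply: annihilated_smul.
  by apply: annihilated_sfac2; apply: Sc; rewrite inE eqxx.
by apply: IH => // b' bs_b'; apply: Sc; rewrite inE bs_b' orbT.
Qed.

(* The coefficients of the product are [1], [-(c1 + c2)] and [c1 * c2[2]]. *)
Lemma annihilated_sfac2_pair c1 c2 :
  (forall u, Sa (c1 u + c2 u) = 0) -> (forall u, Sa (c1 u * c2 (shn u 2)) = 0) ->
  annihilated (smul (sfac2 c1) (sfac2 c2)).
Proof.
move=> Ssum Sprod j u; rewrite smul_sfac2l /sfac2.
case: j => [|[|[|[|[|j]]]]] /=.
- by rewrite subr0 Sa1.
- by rewrite subr0 Sa0.
- by rewrite mulr1 -opprD SaN addrC Ssum oppr0.
- by rewrite mulr0 subr0 Sa0.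
- by rewrite mulrN opprK add0r Sprod.
- by rewrite mulr0 subr0 Sa0.
Qed.

Definition logder x e := Sa x = phi x * e.

Lemma logder1 : logder 1 0.
Proof. by rewrite /logder Sa1 mulr0. Qed.

Lemma logderM x x' e e' : logder x e -> logder x' e' -> logder (x * x') (e + e').
Proof. by rewrite /logder Sa_mul rmorphM => -> ->; ring. Qed.

Lemma logderV x x' e : x * x' = 1 -> logder x e -> logder x' (- e).
Proof.
rewrite /logder => xx' Sx.
have phixx' : phi x * phi x' = 1 by rewrite -rmorphM xx' rmorph1.
have := Sa_mul x x'; rewrite xx' Sa1 Sx => /eqP; rewrite eq_sym addr_eq0 => /eqP Sx'.
have phix'x : phi x' * phi x = 1 by rewrite mulrC.
by rewrite -[Sa x']mul1r -phix'x -mulrA Sx' mulrA phix'x mul1r.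
Qed.

Lemma Sa_logder_eq0 x e : logder x e -> e = 0 -> Sa x = 0.
Proof. by rewrite /logder => -> ->; rewrite mulr0. Qed.

Lemma Sa_add_logder_cancel x m e :
  logder x (- (phi m * e)) -> logder (x * m) e -> Sa (x + x * m) = 0.
Proof. by rewrite /logder Sa_add rmorphM => -> ->; ring. Qed.

End Screening.

Lemma prod_nat_sparse (R : comNzRingType) (F : nat -> R) m k (bs : seq nat) :
  uniq bs -> all (fun b => m <= b < k)%N bs ->
  (forall b, (m <= b < k)%N -> b \notin bs -> F b = 1) ->
  \prod_(m <= b < k) F b = \prod_(b <- bs) F b.
Proof.
move=> bs_uniq bs_range F1; rewrite (bigID (mem bs)) /= [X in _ * X]big1_seq ?mulr1.
  rewrite -big_filter; apply: perm_big; apply: uniq_perm => //.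
    by rewrite filter_uniq // iota_uniq.
  move=> b; rewrite mem_filter mem_index_iota.
  by apply/andP/idP => [[] //|bs_b]; split=> //; move/allP: bs_range => /(_ b bs_b).
by move=> b /andP[bs_b b_range]; apply: F1 => //; rewrite -mem_index_iota.
Qed.

Lemma iota1_split_pair n a : (1 <= a < n)%N ->
  iota 1 n = iota 1 a.-1 ++ a :: a.+1 :: iota a.+2 (n - a.+1).
Proof.
move=> a_range; rewrite -[in LHS](subnKC (_ : a.-1 <= n)%N) ?iotaD; last lia.
have -> : (n - a.-1 = (n - a.+1).+2)%N by lia.
by have -> : (1 + a.-1 = a)%N by lia.
Qed.

Lemma iota1_split_last2 n : (2 <= n)%N -> iota 1 n = iota 1 (n - 2) ++ [:: n.-1; n].
Proof.
move=> n_ge2; rewrite -[in LHS](subnKC (_ : n - 2 <= n)%N) ?iotaD; last lia.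
have -> : (n - (n - 2) = 2)%N by lia.
have -> : (1 + (n - 2) = n.-1)%N by lia.
by rewrite /= (_ : n.-1.+1 = n) //; lia.
Qed.

Section DnScreening.
Variables (n : nat) (Hn : (4 <= n)%N).
Variables (Yr : comNzRingType) (y yi : nat -> CC -> Yr).
Hypothesis Hy : forall b v, (1 <= b <= n)%N -> y b v * yi b v = 1.
Variables (T : comNzRingType) (q qi : nat -> CC -> T).
Hypothesis Hq : forall b v, (1 <= b <= n)%N -> q b v * qi b v = 1.
Variable phi : {rmorphism Yr -> T}.
Hypothesis Hphi : forall b v, (1 <= b <= n)%N -> phi (y b v) = q b (v - 1) * qi b (v + 1).
Variables (a : nat) (Ha : (1 <= a <= n)%N).
Variable s : CC -> T.
Hypothesis Hs : forall v, s (v + 2) = Aroot n q qi a (v + 1) * s v.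
Variable Sa : Yr -> T.
Hypothesis HSadd : forall x x', Sa (x + x') = Sa x + Sa x'.
Hypothesis HSleib : forall x x', Sa (x * x') = phi x * Sa x' + phi x' * Sa x.
Hypothesis HSgen : forall b v, (1 <= b <= n)%N ->
  Sa (y b v) = if b == a then phi (y b v) * s v else 0.

Local Notation logder := (logder phi Sa).
Local Notation zD := (zD n y yi).
Local Notation zbD := (zbD n y yi).
Local Notation Aroot := (Aroot n q qi a).
Local Notation annihilated := (annihilated Sa).

(* The logarithmic derivative [delta_ab S_a(v)] of [Y_b(v)] under [S_a]. *)
Definition sdelta (b : nat) (v : CC) : T := if b == a then s v else 0.

Lemma sdelta_eq b v : b = a -> sdelta b v = s v.
Proof. by move=> ->; rewrite /sdelta eqxx. Qed.

Lemma sdelta_neq b v : b != a -> sdelta b v = 0.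
Proof. by rewrite /sdelta => /negbTE ->. Qed.

Lemma logder_y b v : (1 <= b <= n)%N -> logder (y b v) (sdelta b v).
Proof. by move=> b_range; rewrite /logder HSgen // /sdelta; case: (b == a); rewrite ?mulr0. Qed.

Lemma logder_Yv b v : (b <= n)%N -> logder (Yv y b v) (sdelta b v).
Proof.
rewrite /Yv; case: eqP => [-> _|/eqP b_gt0 b_le_n]; last by apply: logder_y; lia.
by rewrite sdelta_neq; [exact: logder1 | lia].
Qed.

Lemma logder_Yiv b v : (b <= n)%N -> logder (Yiv yi b v) (- sdelta b v).
Proof.
rewrite /Yiv; case: eqP => [-> _|/eqP b_gt0 b_le_n].
  by rewrite sdelta_neq ?oppr0; [exact: logder1 | lia].
by apply: (logderV HSleib (Hy _ _)); [|apply: logder_y]; lia.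
Qed.

Lemma YvE b v : (b != 0)%N -> Yv y b v = y b v.
Proof. by rewrite /Yv => /negbTE ->. Qed.

Lemma YivE b v : (b != 0)%N -> Yiv yi b v = yi b v.
Proof. by rewrite /Yiv => /negbTE ->. Qed.

Lemma Yv_Yiv b v : (b <= n)%N -> Yv y b v * Yiv yi b v = 1.
Proof. by rewrite /Yv /Yiv; case: eqP => [_|/eqP b_gt0 b_le_n]; rewrite ?mulr1 ?Hy //; lia. Qed.

(** * The root factor A_a *)

Lemma phi_yi b v : (1 <= b <= n)%N -> phi (yi b v) = q b (v + 1) * qi b (v - 1).
Proof.
move=> b_range; have phiyyi : phi (y b v) * phi (yi b v) = 1 by rewrite -rmorphM Hy ?rmorph1.
have Hq1 := Hq (v + 1) b_range; have Hq2 := Hq (v - 1) b_range.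
rewrite Hphi // in phiyyi.
transitivity ((q b (v + 1) * qi b (v - 1)) * ((q b (v - 1) * qi b (v + 1)) * phi (yi b v)));
  last by rewrite phiyyi mulr1.
rewrite mulrA -[LHS]mul1r; congr (_ * _).
by rewrite -[1]mulr1 -{1}Hq1 -Hq2; ring.
Qed.

(* A preimage under [phi] of the [b]-th factor of [A_a(v)]; for [b = a] it is
   [Q_a(v-2)/Q_a(v+2) = Y_a(v-1) Y_a(v+1)]. *)
Definition Aroot_factor v b : Yr :=
  if a == b then y b (v - 1) * y b (v + 1)
  else if Dn_edge n a b || Dn_edge n b a then yi b v else 1.

Lemma Aroot_prod v : Aroot v = phi (\prod_(1 <= b < n.+1) Aroot_factor v b).
Proof.
rewrite /Aroot rmorph_prod; apply: eq_big_nat => b /andP[b_gt0 b_le_n].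
have b_range : (1 <= b <= n)%N by lia.
rewrite /Dn_form /Aroot_factor; case: (a == b).
  rewrite rmorphM !Hphi //.
  have -> : v - 1 - 1 = v - ((2 : int)%:~R : CC) by rewrite /=; ring.
  have -> : v + 1 + 1 = v + ((2 : int)%:~R : CC) by rewrite /=; ring.
  rewrite subrK addrK -[X in X = _]mulr1 -(Hq v b_range); ring.
case: (_ || _); last by rewrite rmorph1 /= subr0 addr0 Hq.
rewrite phi_yi //.
have -> : v - ((-1 : int)%:~R : CC) = v + 1 by rewrite /=; ring.
by have -> : v + ((-1 : int)%:~R : CC) = v - 1 by rewrite /=; ring.
Qed.

Lemma Aroot_support v (bs : seq nat) : uniq bs -> all (fun b => 1 <= b <= n)%N bs ->
  (forall b, (1 <= b <= n)%N -> b \notin bs ->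
     (a != b) && ~~ (Dn_edge n a b || Dn_edge n b a)) ->
  Aroot v = phi (\prod_(b <- bs) Aroot_factor v b).
Proof.
move=> bs_uniq bs_range bs_full; rewrite Aroot_prod; congr (phi _).
apply: prod_nat_sparse => // b b_range bs_b.
rewrite /Aroot_factor; have /andP[/negbTE -> /negbTE ->] := bs_full b ltac:(lia) bs_b; done.
Qed.

Lemma Aroot_factor_self v : Aroot_factor v a = y a (v - 1) * y a (v + 1).
Proof. by rewrite /Aroot_factor eqxx. Qed.

Lemma Aroot_factor_adj v b :
  a != b -> Dn_edge n a b || Dn_edge n b a -> Aroot_factor v b = yi b v.
Proof. by rewrite /Aroot_factor => /negbTE -> ->. Qed.

Ltac Aroot_support_tac :=
  first [ by rewrite /= ?inE; lia
        | by move=> b ?; rewrite !inE => ?; apply/andP; split;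
             [|apply/negP]; rewrite /Dn_edge; lia ].

Lemma Aroot_inner v : (a <= n - 3)%N ->
  Aroot v = phi (y a (v - 1) * y a (v + 1) * Yiv yi a.-1 v * yi a.+1 v).
Proof.
move=> a_le; have [a1|a_gt1] := eqVneq a 1%N.
  rewrite (@Aroot_support v [:: a; a.+1]); try Aroot_support_tac.
  rewrite !big_cons big_nil Aroot_factor_self Aroot_factor_adj;
    [| lia | rewrite /Dn_edge; lia].
  by congr (phi _); rewrite /Yiv a1 /=; ring.
rewrite (@Aroot_support v [:: a; a.-1; a.+1]); try Aroot_support_tac.
rewrite !big_cons big_nil Aroot_factor_self !Aroot_factor_adj ?YivE;
  try (rewrite /Dn_edge; lia); try lia.
by rewrite mulr1 !mulrA.
Qed.

Lemma Aroot_branch v : a = (n - 2)%N ->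
  Aroot v = phi (y a (v - 1) * y a (v + 1) * yi a.-1 v * yi a.+1 v * yi n v).
Proof.
move=> a_eq; rewrite (@Aroot_support v [:: a; a.-1; a.+1; n]); try Aroot_support_tac.
rewrite !big_cons big_nil Aroot_factor_self !Aroot_factor_adj;
  try (rewrite /Dn_edge; lia); try lia.
by congr (phi _); ring.
Qed.

Lemma Aroot_tail v : (a = n - 1)%N \/ a = n ->
  Aroot v = phi (y a (v - 1) * y a (v + 1) * yi (n - 2) v).
Proof.
move=> a_eq; rewrite (@Aroot_support v [:: a; (n - 2)%N]); try Aroot_support_tac.
rewrite !big_cons big_nil Aroot_factor_self !Aroot_factor_adj;
  try (rewrite /Dn_edge; lia); try lia.
by congr (phi _); ring.
Qed.

(** * Logarithmic derivatives of the z-functions *)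

Lemma zD_le b u : (b <= n - 2)%N -> zD b u = Yv y b (shn u b) * Yiv yi b.-1 (shn u b.+1).
Proof. by move=> b_le; rewrite /zD b_le. Qed.

Lemma zD_pred_n u :
  zD n.-1 u = Yv y n (shn u n.-1) * Yv y n.-1 (shn u n.-1) * Yiv yi (n - 2) (shn u n).
Proof. by rewrite /zD ifF ?eqxx //; apply/negbTE; lia. Qed.

Lemma zD_n u : zD n u = Yv y n (shn u n.-1) * Yiv yi n.-1 (shn u n.+1).
Proof. by rewrite /zD ifF ?ifF //; apply/negbTE; lia. Qed.

Lemma zbD_le b u : (b <= n - 2)%N ->
  zbD b u = Yv y b.-1 (shn u (2 * n - b - 1)) * Yiv yi b (shn u (2 * n - b)).
Proof. by move=> b_le; rewrite /zbD b_le. Qed.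

Lemma zbD_pred_n u :
  zbD n.-1 u = Yv y (n - 2) (shn u n) * Yiv yi n (shn u n.+1) * Yiv yi n.-1 (shn u n.+1).
Proof. by rewrite /zbD ifF ?eqxx //; apply/negbTE; lia. Qed.

Lemma zbD_n u : zbD n u = Yv y n.-1 (shn u n.-1) * Yiv yi n (shn u n.+1).
Proof. by rewrite /zbD ifF ?ifF //; apply/negbTE; lia. Qed.

Ltac logder_tac :=
  repeat first [ apply: (logderM HSleib) | apply: logder_Yv | apply: logder_Yiv ]; lia.

Lemma logder_zD_le b u : (1 <= b <= n - 2)%N ->
  logder (zD b u) (sdelta b (shn u b) - sdelta b.-1 (shn u b.+1)).
Proof. by move=> b_range; rewrite zD_le; [logder_tac | lia]. Qed.

Lemma logder_zD_pred_n u : logder (zD n.-1 u)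
  (sdelta n (shn u n.-1) + sdelta n.-1 (shn u n.-1) - sdelta (n - 2) (shn u n)).
Proof. by rewrite zD_pred_n; logder_tac. Qed.

Lemma logder_zD_n u : logder (zD n u) (sdelta n (shn u n.-1) - sdelta n.-1 (shn u n.+1)).
Proof. by rewrite zD_n; logder_tac. Qed.

Lemma logder_zbD_le b u : (1 <= b <= n - 2)%N -> logder (zbD b u)
  (sdelta b.-1 (shn u (2 * n - b - 1)) - sdelta b (shn u (2 * n - b))).
Proof. by move=> b_range; rewrite zbD_le; [logder_tac | lia]. Qed.

Lemma logder_zbD_pred_n u : logder (zbD n.-1 u)
  (sdelta (n - 2) (shn u n) - sdelta n (shn u n.+1) - sdelta n.-1 (shn u n.+1)).
Proof. by rewrite zbD_pred_n; logder_tac. Qed.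

Lemma logder_zbD_n u : logder (zbD n u) (sdelta n.-1 (shn u n.-1) - sdelta n (shn u n.+1)).
Proof. by rewrite zbD_n; logder_tac. Qed.

Lemma Sa_zD_far b u : (1 <= b <= n)%N ->
  (a.+2 <= b)%N \/ (b < a)%N /\ (b <= n - 2)%N -> Sa (zD b u) = 0.
Proof.
move=> b_range far; have [b_le|b_gt] := leqP b (n - 2).
  apply: (Sa_logder_eq0 (logder_zD_le u _)); first lia.
  by rewrite !sdelta_neq ?subr0 //; lia.
have [b_eq|b_eq] : b = n.-1 \/ b = n by lia.
  rewrite b_eq; apply: (Sa_logder_eq0 (logder_zD_pred_n u)).
  by rewrite !sdelta_neq ?subr0 ?addr0 //; lia.
rewrite b_eq; apply: (Sa_logder_eq0 (logder_zD_n u)).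
by rewrite !sdelta_neq ?subr0 //; lia.
Qed.

Lemma Sa_zbD_far b u : (1 <= b <= n)%N ->
  (a.+2 <= b)%N \/ (b < a)%N /\ (b <= n - 2)%N -> Sa (zbD b u) = 0.
Proof.
move=> b_range far; have [b_le|b_gt] := leqP b (n - 2).
  apply: (Sa_logder_eq0 (logder_zbD_le u _)); first lia.
  by rewrite !sdelta_neq ?subr0 //; lia.
have [b_eq|b_eq] : b = n.-1 \/ b = n by lia.
  rewrite b_eq; apply: (Sa_logder_eq0 (logder_zbD_pred_n u)).
  by rewrite !sdelta_neq ?subr0 //; lia.
rewrite b_eq; apply: (Sa_logder_eq0 (logder_zbD_n u)).
by rewrite !sdelta_neq ?subr0 //; lia.
Qed.

(** * Cancellation in adjacent pairs of factors *)

(* [z(u) + z'(u)] is killed when [z'] is [z] times the monomial [M] with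
   [phi M = A_a(W+1)], because of the relation [S_a(W+2) = A_a(W+1) S_a(W)]. *)
Lemma Sa_add_Aroot_cancel c1 c2 d1 d2 W M :
  logder c1 d1 -> logder c2 d2 -> d1 = - s (W + 2) -> d2 = s W ->
  Aroot (W + 1) = phi M -> c1 * M = c2 -> Sa (c1 + c2) = 0.
Proof.
move=> ld1 ld2 d1E d2E AM c2E; subst c2.
apply: (Sa_add_logder_cancel (phi := phi) (e := s W) HSadd); last by rewrite -d2E.
by rewrite -AM -Hs -d1E.
Qed.

Lemma Sa_mul_logder_cancel c1 c2 d1 d2 :
  logder c1 d1 -> logder c2 d2 -> d1 + d2 = 0 -> Sa (c1 * c2) = 0.
Proof. by move=> ld1 ld2; apply: Sa_logder_eq0; apply: (logderM HSleib). Qed.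

Lemma annihilated_zD_pair_inner : (a <= n - 3)%N ->
  annihilated (smul (sfac2 (zD a.+1)) (sfac2 (zD a))).
Proof.
move=> a_le; apply: (annihilated_sfac2_pair HSadd HSleib) => u.
- apply: (@Sa_add_Aroot_cancel _ _ _ _ (shn u a)
     (y a (shn u a) * y a (shn u a.+2) * Yiv yi a.-1 (shn u a.+1) * yi a.+1 (shn u a.+1))).
  + by apply: logder_zD_le; lia.
  + by apply: logder_zD_le; lia.
  + by rewrite sdelta_neq ?add0r /= ?sdelta_eq ?shnSS //; lia.
  + by rewrite sdelta_eq // (@sdelta_neq a.-1) ?subr0 //; lia.
  + by rewrite Aroot_inner // shnS shnSB1 shnS.
  + rewrite !zD_le /= ?(@YvE a.+1) ?(@YvE a) ?(@YivE a); try lia.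
    transitivity (y a (shn u a) * Yiv yi a.-1 (shn u a.+1) *
       (y a.+1 (shn u a.+1) * yi a.+1 (shn u a.+1)) * (y a (shn u a.+2) * yi a (shn u a.+2)));
      first ring.
    by rewrite !Hy ?mulr1 //; lia.
- apply: Sa_mul_logder_cancel; [apply: logder_zD_le | apply: logder_zD_le |]; try lia.
  rewrite (@sdelta_neq a.+1) ?(@sdelta_neq a.-1) /= ?sdelta_eq ?shnA; try lia.
  by rewrite add2n oppr0 add0r addr0 addNr.
Qed.

Lemma annihilated_zbD_pair_inner : (a <= n - 3)%N ->
  annihilated (smul (sfac2 (zbD a)) (sfac2 (zbD a.+1))).
Proof.
move=> a_le; apply: (annihilated_sfac2_pair HSadd HSleib) => u.
- pose X := (2 * n - a.+1 - 1)%N.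
  have e1 : (2 * n - a - 1 = X.+1)%N by rewrite /X; lia.
  have e2 : (2 * n - a = X.+2)%N by rewrite /X; lia.
  have e3 : (2 * n - a.+1 = X.+1)%N by rewrite /X; lia.
  apply: (@Sa_add_Aroot_cancel _ _ _ _ (shn u X)
     (y a (shn u X) * y a (shn u X.+2) * Yiv yi a.-1 (shn u X.+1) * yi a.+1 (shn u X.+1))).
  + by apply: logder_zbD_le; lia.
  + by apply: logder_zbD_le; lia.
  + by rewrite (@sdelta_neq a.-1) ?add0r ?sdelta_eq ?shnSS ?e2 //; lia.
  + by rewrite sdelta_eq // (@sdelta_neq a.+1) ?subr0 //; lia.
  + by rewrite Aroot_inner // shnS shnSB1 shnS.
  + rewrite !zbD_le -/X ?e1 ?e2 ?e3 /= ?(@YivE a.+1) ?(@YvE a) ?(@YivE a);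
      try lia.
    transitivity (y a (shn u X) * yi a.+1 (shn u X.+1) *
       (Yv y a.-1 (shn u X.+1) * Yiv yi a.-1 (shn u X.+1)) * (y a (shn u X.+2) * yi a (shn u X.+2)));
      first ring.
    by rewrite Hy ?Yv_Yiv ?mulr1 //; lia.
- apply: Sa_mul_logder_cancel; [apply: logder_zbD_le | apply: logder_zbD_le |]; try lia.
  rewrite (@sdelta_neq a.+1) ?(@sdelta_neq a.-1) /= ?sdelta_eq ?shnA; try lia.
  have -> : (2 + (2 * n - a.+1 - 1) = 2 * n - a)%N by lia.
  by rewrite oppr0 add0r addr0 addNr.
Qed.

Lemma annihilated_zD_pair_branch : a = (n - 2)%N ->
  annihilated (smul (sfac2 (zD a.+1)) (sfac2 (zD a))).
Proof.
move=> a_eq; have aS : a.+1 = n.-1 by lia.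
have n2 : (n - 2)%N = a by lia.
have shn_n u : shn u n = shn u a.+2 by congr (shn u _); lia.
rewrite aS; apply: (annihilated_sfac2_pair HSadd HSleib) => u.
- apply: (@Sa_add_Aroot_cancel _ _ _ _ (shn u a) (y a (shn u a) * y a (shn u a.+2) *
     yi a.-1 (shn u a.+1) * yi a.+1 (shn u a.+1) * yi n (shn u a.+1))).
  + exact: logder_zD_pred_n.
  + by apply: logder_zD_le; lia.
  + rewrite n2 (@sdelta_neq n) ?(@sdelta_neq n.-1) ?sdelta_eq ?add0r; try lia.
    by rewrite shnSS shn_n.
  + by rewrite sdelta_eq // (@sdelta_neq a.-1) ?subr0 //; lia.
  + by rewrite Aroot_branch // shnS shnSB1 shnS.
  + rewrite zD_pred_n zD_le; last lia.
    rewrite n2 shn_n -aS ?(@YvE n) ?(@YvE a.+1) ?(@YivE a)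
      ?(@YvE a) ?(@YivE a.-1); try lia.
    transitivity (y a (shn u a) * yi a.-1 (shn u a.+1) *
       (y n (shn u a.+1) * yi n (shn u a.+1)) * (y a.+1 (shn u a.+1) * yi a.+1 (shn u a.+1))
       * (y a (shn u a.+2) * yi a (shn u a.+2))); first ring.
    by rewrite !Hy ?mulr1 //; lia.
- apply: Sa_mul_logder_cancel; [apply: logder_zD_pred_n | apply: logder_zD_le |]; try lia.
  rewrite n2 (@sdelta_neq n) ?(@sdelta_neq n.-1) ?(@sdelta_neq a.-1) ?sdelta_eq ?shnA; try lia.
  by rewrite shn_n add2n oppr0 !add0r addr0 addNr.
Qed.

Lemma annihilated_zbD_pair_branch : a = (n - 2)%N ->
  annihilated (smul (sfac2 (zbD a)) (sfac2 (zbD a.+1))).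
Proof.
move=> a_eq; have aS : a.+1 = n.-1 by lia.
have n2 : (n - 2)%N = a by lia.
have e1 : (2 * n - a - 1 = n.+1)%N by lia.
have e2 : (2 * n - a = n.+2)%N by lia.
rewrite aS; apply: (annihilated_sfac2_pair HSadd HSleib) => u.
- apply: (@Sa_add_Aroot_cancel _ _ _ _ (shn u n) (y a (shn u n) * y a (shn u n.+2) *
     yi a.-1 (shn u n.+1) * yi a.+1 (shn u n.+1) * yi n (shn u n.+1))).
  + by apply: logder_zbD_le; lia.
  + exact: logder_zbD_pred_n.
  + by rewrite (@sdelta_neq a.-1) ?add0r ?sdelta_eq ?shnSS ?e2 //; lia.
  + by rewrite n2 sdelta_eq // (@sdelta_neq n) ?(@sdelta_neq n.-1) ?subr0 //; lia.
  + by rewrite Aroot_branch // shnS shnSB1 shnS.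
  + rewrite zbD_pred_n zbD_le; last lia.
    rewrite n2 e1 e2 -aS ?(@YivE n) ?(@YivE a.+1) ?(@YivE a)
      ?(@YvE a) ?(@YvE a.-1); try lia.
    transitivity (y a (shn u n) * yi n (shn u n.+1) * yi a.+1 (shn u n.+1) *
       (y a.-1 (shn u n.+1) * yi a.-1 (shn u n.+1)) * (y a (shn u n.+2) * yi a (shn u n.+2)));
      first ring.
    by rewrite !Hy ?mulr1 //; lia.
- apply: Sa_mul_logder_cancel; [apply: logder_zbD_le | apply: logder_zbD_pred_n |]; try lia.
  rewrite n2 (@sdelta_neq n) ?(@sdelta_neq n.-1) ?(@sdelta_neq a.-1) ?sdelta_eq ?shnA; try lia.
  by rewrite e2 add2n oppr0 !add0r !addr0 addNr.
Qed.

Lemma annihilated_zD_pair : (a <= n - 2)%N ->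
  annihilated (smul (sfac2 (zD a.+1)) (sfac2 (zD a))).
Proof.
move=> a_le; have [a_le3|a_eq] : (a <= n - 3)%N \/ a = (n - 2)%N by lia.
  exact: annihilated_zD_pair_inner.
exact: annihilated_zD_pair_branch.
Qed.

Lemma annihilated_zbD_pair : (a <= n - 2)%N ->
  annihilated (smul (sfac2 (zbD a)) (sfac2 (zbD a.+1))).
Proof.
move=> a_le; have [a_le3|a_eq] : (a <= n - 3)%N \/ a = (n - 2)%N by lia.
  exact: annihilated_zbD_pair_inner.
exact: annihilated_zbD_pair_branch.
Qed.

Lemma Aroot_tail_shift u : (a = n - 1)%N \/ a = n ->
  Aroot (shn u n.-1 + 1) = phi (y a (shn u n.-1) * y a (shn u n.+1) * yi (n - 2) (shn u n)).
Proof.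
have n1S : n.-1.+1 = n by lia.
have n1SS : n.-1.+2 = n.+1 by lia.
by move=> a_tail; rewrite Aroot_tail // shnS shnSB1 shnS n1SS n1S.
Qed.

Lemma shn_pred_n_add2 u : shn u n.-1 + 2 = shn u n.+1.
Proof. by rewrite shnSS; congr (shn u _); lia. Qed.

Section PenultimateNode.
Hypothesis a_eq : a = n.-1.

Let n2_neq : (n - 2)%N != a. Proof. lia. Qed.
Let n_neq : n != a. Proof. lia. Qed.
Let add2_pred_n : (2 + n.-1 = n.+1)%N. Proof. lia. Qed.

Lemma annihilated_zbD_tail_pair : annihilated (smul (sfac2 (zbD n.-1)) (sfac2 (zbD n))).
Proof.
apply: (annihilated_sfac2_pair HSadd HSleib) => u.
- apply: (@Sa_add_Aroot_cancel _ _ _ _ (shn u n.-1)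
     (y n.-1 (shn u n.-1) * y n.-1 (shn u n.+1) * yi (n - 2) (shn u n))).
  + exact: logder_zbD_pred_n.
  + exact: logder_zbD_n.
  + by rewrite (sdelta_neq _ n2_neq) (sdelta_neq _ n_neq) sdelta_eq // shn_pred_n_add2 subr0 add0r.
  + by rewrite (sdelta_neq _ n_neq) sdelta_eq // subr0.
  + by rewrite Aroot_tail_shift ?a_eq //; lia.
  + rewrite zbD_pred_n zbD_n (@YvE (n - 2)%N) ?(@YivE n) ?(@YivE n.-1)
      ?(@YvE n.-1); try lia.
    transitivity (y n.-1 (shn u n.-1) * yi n (shn u n.+1) *
      (y (n - 2) (shn u n) * yi (n - 2) (shn u n)) * (y n.-1 (shn u n.+1) * yi n.-1 (shn u n.+1)));
      first ring.
    by rewrite !Hy ?mulr1 //; lia.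
- apply: Sa_mul_logder_cancel; [apply: logder_zbD_pred_n | apply: logder_zbD_n |].
  rewrite (sdelta_neq _ n2_neq) !(sdelta_neq _ n_neq) !sdelta_eq // !shnA add2_pred_n.
  ring.
Qed.

Lemma annihilated_zD_tail_pair : annihilated (smul (sfac2 (zD n)) (sfac2 (zD n.-1))).
Proof.
apply: (annihilated_sfac2_pair HSadd HSleib) => u.
- apply: (@Sa_add_Aroot_cancel _ _ _ _ (shn u n.-1)
     (y n.-1 (shn u n.-1) * y n.-1 (shn u n.+1) * yi (n - 2) (shn u n))).
  + exact: logder_zD_n.
  + exact: logder_zD_pred_n.
  + by rewrite (sdelta_neq _ n_neq) sdelta_eq // shn_pred_n_add2 add0r.
  + by rewrite (sdelta_neq _ n2_neq) (sdelta_neq _ n_neq) sdelta_eq // subr0 add0r.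
  + by rewrite Aroot_tail_shift ?a_eq //; lia.
  + rewrite zD_pred_n zD_n (@YvE n) ?(@YivE (n - 2)%N) ?(@YivE n.-1)
      ?(@YvE n.-1); try lia.
    transitivity (y n (shn u n.-1) * y n.-1 (shn u n.-1) * yi (n - 2) (shn u n) *
      (y n.-1 (shn u n.+1) * yi n.-1 (shn u n.+1))); first ring.
    by rewrite !Hy ?mulr1 //; lia.
- apply: Sa_mul_logder_cancel; [apply: logder_zD_n | apply: logder_zD_pred_n |].
  rewrite (sdelta_neq _ n2_neq) !(sdelta_neq _ n_neq) !sdelta_eq // !shnA add2_pred_n.
  ring.
Qed.

Lemma annihilated_middle_pred_n :
  annihilated (sgeom4 (fun u => zD n u * zbD n (shn u 2))).
Proof.
apply: (annihilated_sgeom4 HSadd HSleib) => u.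
apply: Sa_mul_logder_cancel; [apply: logder_zD_n | apply: logder_zbD_n |].
rewrite !(sdelta_neq _ n_neq) !sdelta_eq // !shnA add2_pred_n.
ring.
Qed.

End PenultimateNode.

Section LastNode.
Hypothesis a_eq : a = n.

Let n2_neq : (n - 2)%N != a. Proof. lia. Qed.
Let n1_neq : n.-1 != a. Proof. lia. Qed.
Let add2_pred_n : (2 + n.-1 = n.+1)%N. Proof. lia. Qed.

Lemma annihilated_zbD_pred_n_zD_n_pair : annihilated (smul (sfac2 (zbD n.-1)) (sfac2 (zD n))).
Proof.
apply: (annihilated_sfac2_pair HSadd HSleib) => u.
- apply: (@Sa_add_Aroot_cancel _ _ _ _ (shn u n.-1)
     (y n (shn u n.-1) * y n (shn u n.+1) * yi (n - 2) (shn u n))).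
  + exact: logder_zbD_pred_n.
  + exact: logder_zD_n.
  + by rewrite (sdelta_neq _ n2_neq) (sdelta_neq _ n1_neq) sdelta_eq // shn_pred_n_add2; ring.
  + by rewrite (sdelta_neq _ n1_neq) sdelta_eq // subr0.
  + by rewrite Aroot_tail_shift ?a_eq //; right.
  + rewrite zbD_pred_n zD_n (@YvE (n - 2)%N) ?(@YivE n) ?(@YivE n.-1)
      ?(@YvE n); try lia.
    transitivity (y n (shn u n.-1) * yi n.-1 (shn u n.+1) *
      (y (n - 2) (shn u n) * yi (n - 2) (shn u n)) * (y n (shn u n.+1) * yi n (shn u n.+1)));
      first ring.
    by rewrite !Hy ?mulr1 //; lia.
- apply: Sa_mul_logder_cancel; [apply: logder_zbD_pred_n | apply: logder_zD_n |].
  rewrite (sdelta_neq _ n2_neq) !(sdelta_neq _ n1_neq) !sdelta_eq // !shnA add2_pred_n.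
  ring.
Qed.

Lemma annihilated_zbD_n_zD_pred_n_pair : annihilated (smul (sfac2 (zbD n)) (sfac2 (zD n.-1))).
Proof.
apply: (annihilated_sfac2_pair HSadd HSleib) => u.
- apply: (@Sa_add_Aroot_cancel _ _ _ _ (shn u n.-1)
     (y n (shn u n.-1) * y n (shn u n.+1) * yi (n - 2) (shn u n))).
  + exact: logder_zbD_n.
  + exact: logder_zD_pred_n.
  + by rewrite (sdelta_neq _ n1_neq) sdelta_eq // shn_pred_n_add2; ring.
  + by rewrite (sdelta_neq _ n2_neq) (sdelta_neq _ n1_neq) sdelta_eq //; ring.
  + by rewrite Aroot_tail_shift ?a_eq //; right.
  + rewrite zD_pred_n zbD_n (@YvE n) ?(@YivE (n - 2)%N) ?(@YivE n)
      ?(@YvE n.-1); try lia.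
    transitivity (y n (shn u n.-1) * y n.-1 (shn u n.-1) * yi (n - 2) (shn u n) *
      (y n (shn u n.+1) * yi n (shn u n.+1))); first ring.
    by rewrite !Hy ?mulr1 //; lia.
- apply: Sa_mul_logder_cancel; [apply: logder_zbD_n | apply: logder_zD_pred_n |].
  rewrite (sdelta_neq _ n2_neq) !(sdelta_neq _ n1_neq) !sdelta_eq // !shnA add2_pred_n.
  ring.
Qed.

Lemma annihilated_middle_n : annihilated (sgeom4 (fun u => zbD n u * zD n (shn u 2))).
Proof.
apply: (annihilated_sgeom4 HSadd HSleib) => u.
apply: Sa_mul_logder_cancel; [apply: logder_zbD_n | apply: logder_zD_n |].
rewrite !(sdelta_neq _ n1_neq) !sdelta_eq // !shnA add2_pred_n.
ring.
Qed.

End LastNode.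

Lemma annihilated_Lseries_le : (a <= n - 2)%N -> annihilated (Lseries n y yi).
Proof.
move=> a_le; rewrite /Lseries /Lright /Lmid (@iota1_split_pair n a); last lia.
rewrite rev_cat !rev_cons -!cats1 -!catA !foldr_cat /=.
apply: (annihilated_foldr_sfac2 HSadd HSleib).
  by move=> b; rewrite mem_iota => b_range u; apply: Sa_zbD_far; lia.
apply: (annihilated_smul3 HSadd HSleib); first exact: annihilated_zbD_pair.
apply: (annihilated_foldr_sfac2 HSadd HSleib).
  by move=> b; rewrite mem_iota => b_range u; apply: Sa_zbD_far; lia.
apply: (annihilated_smul HSadd HSleib).
  apply: (annihilated_sgeom4 HSadd HSleib) => u.
  by rewrite HSleib Sa_zD_far ?Sa_zbD_far ?mulr0 ?addr0 //; lia.
apply: (annihilated_foldr_sfac2 HSadd HSleib).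
  by move=> b; rewrite mem_rev mem_iota => b_range u; apply: Sa_zD_far; lia.
apply: (annihilated_smul3 HSadd HSleib); first exact: annihilated_zD_pair.
apply: (annihilated_foldr_sfac2 HSadd HSleib); last exact: annihilated_sone.
by move=> b; rewrite mem_rev mem_iota => b_range u; apply: Sa_zD_far; lia.
Qed.

Lemma annihilated_Lseries_tail : (n - 1 <= a)%N -> annihilated (Lseries n y yi).
Proof.
move=> a_ge; rewrite /Lseries /Lright /Lmid iota1_split_last2; last lia.
rewrite rev_cat /= !foldr_cat /=.
set R := foldr _ (sone Yr) (rev _).
have R0 : annihilated R.
  apply: (annihilated_foldr_sfac2 HSadd HSleib); last exact: annihilated_sone.
  by move=> b; rewrite mem_rev mem_iota => b_range u; apply: Sa_zD_far; lia.
apply: (annihilated_foldr_sfac2 HSadd HSleib).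
  by move=> b; rewrite mem_iota => b_range u; apply: Sa_zbD_far; lia.
have [a_eq|a_eq] : a = n.-1 \/ a = n by lia.
  apply: (annihilated_smul3 HSadd HSleib); first exact: annihilated_zbD_tail_pair.
  apply: (annihilated_smul HSadd HSleib); first exact: annihilated_middle_pred_n.
  apply: (annihilated_smul3 HSadd HSleib) => //; exact: annihilated_zD_tail_pair.
rewrite -(smulA (sgeom4 _)) -(smulA (sfac2 (zbD n))) sfac2_sgeom4_swap !smulA.
apply: (annihilated_smul3 HSadd HSleib); first exact: annihilated_zbD_pred_n_zD_n_pair.
apply: (annihilated_smul HSadd HSleib); first exact: annihilated_middle_n.
apply: (annihilated_smul3 HSadd HSleib) => //; exact: annihilated_zbD_n_zD_pred_n_pair.
Qed.

End DnScreening.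

Theorem mainTheorem12
  (n : nat) (Hn : (4 <= n)%N)
  (* a ring playing the role of  Y = Z[Y_b(v)^{+-1}], with the Y_b(v) and
     their inverses *)
  (Yr : comNzRingType) (y yi : nat -> CC -> Yr)
  (Hy : forall b v, (1 <= b <= n)%N -> y b v * yi b v = 1)
  (* a ring playing the role of S, with the images of Q_b(v)^{+-1} *)
  (T : comNzRingType) (q qi : nat -> CC -> T)
  (Hq : forall b v, (1 <= b <= n)%N -> q b v * qi b v = 1)
  (* the inclusion Y -> S, Y_b(v) = Q_b(v-1)/Q_b(v+1) *)
  (phi : {rmorphism Yr -> T})
  (Hphi : forall b v, (1 <= b <= n)%N -> phi (y b v) = q b (v - 1) * qi b (v + 1))
  (a : nat) (Ha : (1 <= a <= n)%N)
  (* the symbols S_a(v), subject to S_a(v+2) = A_a(v+1) S_a(v) *)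
  (s : CC -> T)
  (Hs : forall v, s (v + 2) = Aroot n q qi a (v + 1) * s v)
  (* the screening operator S_a : additive, Leibniz, S_a Y_b(v) = delta_ab Y_b(v) S_a(v) *)
  (Sa : Yr -> T)
  (HSadd : forall x x', Sa (x + x') = Sa x + Sa x')
  (HSleib : forall x x', Sa (x * x') = phi x * Sa x' + phi x' * Sa x)
  (HSgen : forall b v, (1 <= b <= n)%N ->
     Sa (y b v) = if b == a then phi (y b v) * s v else 0) :
  forall (u : CC) (j : nat), Sa (Lseries n y yi j u) = 0.
Proof.
move=> u j; have [a_le|a_ge] := leqP a (n - 2).
  exact: (annihilated_Lseries_le Hn Hy Hq Hphi Ha Hs HSadd HSleib HSgen).
apply: (annihilated_Lseries_tail Hn Hy Hq Hphi Ha Hs HSadd HSleib HSgen); lia.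
Qed.
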